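(* Let $\alpha>-1$, $\beta>-1$, $c>0$, $\omega_{\alpha,\beta}(x)=(1-x)^{\alpha}(1+x)^{\beta}$, and $\mathcal{F}_c^{(\alpha,\beta)}[\phi](x)=\int_{-1}^{1}e^{c(xy-1)}\phi(y)\omega_{\alpha,\beta}(y)dy$ on $L^2((-1,1),\omega_{\alpha,\beta}(x)dx)$. Let $\psi_n^{(\alpha,\beta)}(\cdot;c)$ be an eigenfunction of $\mathcal{F}_c^{(\alpha,\beta)}$ with eigenvalue $\mu_n^{(\alpha,\beta)}(c)\ne0$, normalized so that $\int_{-1}^1(\psi_n^{(\alpha,\beta)}(x;c))^2\omega_{\alpha,\beta}(x)dx=(\mu_n^{(\alpha,\beta)}(c))^2$. Then for all $x\in(-1,1)$, $$|\psi_n^{(\alpha,\beta)}(x;c)|\le\frac{1}{\mathbf{P}_0^{(\alpha,\beta)}(x)}.$$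
   Context: $\mathbf{P}_0^{(\alpha,\beta)}$ is the normalized Jacobi polynomial of degree $0$, i.e. the constant $\mathbf{P}_0^{(\alpha,\beta)}=1/\sqrt{a_0^{\alpha,\beta}}$ with $a_0^{\alpha,\beta}=\int_{-1}^1\omega_{\alpha,\beta}(x)dx=\frac{2^{\alpha+\beta+1}\Gamma(\alpha+1)\Gamma(\beta+1)}{\Gamma(\alpha+\beta+2)}$, so that $\mathbf{P}_0^{(\alpha,\beta)}$ has unit norm in $L^2((-1,1),\omega_{\alpha,\beta}(x)dx)$. *)

From HB Require Import structures.
From mathcomp Require Import all_boot all_order all_algebra.
From mathcomp Require Import all_classical all_reals all_analysis.
Set Implicit Arguments. Unset Strict Implicit. Unset Printing Implicit Defensive.
Import Order.TTheory GRing.Theory Num.Theory.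
Local Open Scope ring_scope.
Local Open Scope classical_set_scope.

Definition jacobi_weight {R : realType} (a b : R) (x : R) : R :=
  ((1 - x) `^ a) * ((1 + x) `^ b).

Definition jacobi_a0 {R : realType} (a b : R) : R :=
  Rintegral lebesgue_measure `]-1, 1[ (jacobi_weight a b).

(* normalized Jacobi polynomial of degree 0: the constant 1/sqrt(a_0) *)
Definition jacobiP0 {R : realType} (a b : R) (x : R) : R :=
  (Num.sqrt (jacobi_a0 a b))^-1.

From HB Require Import structures.
From mathcomp Require Import all_boot all_order all_algebra.
From mathcomp Require Import all_classical all_reals all_analysis.
From mathcomp Require Import measurable_realfun.
From mathcomp Require Import ring lra.
Import Order.TTheory GRing.Theory Num.Theory.
Import numFieldNormedType.Exports.
Local Open Scope ring_scope.
Local Open Scope classical_set_scope.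

(* The eigen-equation at x reads mu psi(x) = \int e^(c(xy-1)) psi(y) w(y) dy with
   a kernel in (0, 1] on the square.  Bounding |psi(y)| <= l/2 + psi(y)^2/(2l)
   pointwise gives |mu psi(x)| <= l a_0/2 + mu^2/(2l) for every l > 0, and the
   choice l = |mu|/sqrt(a_0) yields |psi(x)| <= sqrt(a_0) = 1/P_0.  This is
   Cauchy-Schwarz in a form needing no integrability of psi beyond its norm.
   Finiteness of a_0 for a, b > -1 comes from
   w(y) <= e^|b| (1-y)^a + e^|a| (1+y)^b, the powers (1 +- y)^p being integrated
   by the fundamental theorem of calculus on an exhaustion of ]-1, 1[ by
   compact intervals. *)

Section affine_powR.
Context {R : realType}.
Implicit Types s p q y z : R.

Lemma is_derive_affine s y : is_derive y 1 (fun z => 1 + s * z) s.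
Proof.
have -> : (fun z => 1 + s * z) = cst 1 + s \*: (@id R) by apply/funext.
rewrite -[X in is_derive _ _ _ X]add0r; apply: is_deriveD.
by rewrite -[X in is_derive _ _ _ X]mulr1; exact: is_deriveZ.
Qed.

Lemma is_derive_powR_affine s q y : 0 < 1 + s * y ->
  is_derive y 1 (fun z => (1 + s * z) `^ q) (q * (1 + s * y) `^ (q - 1) * s).
Proof.
move=> hy; exact (@is_derive1_comp _ (fun x : R => x `^ q) (fun z => 1 + s * z)
  y _ _ (is_derive1_powR q hy) (is_derive_affine s y)).
Qed.

Definition affine_powR_primitive s p z := (s * (p + 1))^-1 * (1 + s * z) `^ (p + 1).

Lemma is_derive_affine_powR_primitive s p y : s != 0 -> p + 1 != 0 ->
  0 < 1 + s * y -> is_derive y 1 (affine_powR_primitive s p) ((1 + s * y) `^ p).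
Proof.
move=> s0 p1 hy.
have := is_deriveZ (s * (p + 1))^-1 (is_derive_powR_affine s (p + 1) y hy).
congr is_derive; rewrite /GRing.scale /= addrK.
by field; apply/andP.
Qed.

Lemma is_derive_continuous (f : R -> R) y (df : R) :
  is_derive y 1 f df -> {for y, continuous f}.
Proof. by case=> d _; apply: differentiable_continuous; exact/derivable1_diffP. Qed.

Lemma affine_gt0_lt2 s y : `|s| <= 1 -> -1 < y < 1 -> 0 < 1 + s * y < 2.
Proof.
move=> hs /andP[y1 y2].
have : `|s * y| < 1.
  rewrite normrM; apply: le_lt_trans (ler_piMl (normr_ge0 y) hs) _.
  by rewrite ltr_norml y1 y2.
by rewrite ltr_norml => /andP[h1 h2]; apply/andP; split; lra.
Qed.

Lemma integral_powR_affine_gt0_lt2cc s p lo hi : s != 0 -> p + 1 != 0 -> lo < hi ->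
  (forall y, lo <= y <= hi -> 0 < 1 + s * y) ->
  (\int[lebesgue_measure]_(y in `[lo, hi]) ((1 + s * y) `^ p)%:E =
   (affine_powR_primitive s p hi)%:E - (affine_powR_primitive s p lo)%:E)%E.
Proof.
move=> s0 p1 lohi pos.
have dP y : lo <= y <= hi ->
    is_derive y 1 (affine_powR_primitive s p) ((1 + s * y) `^ p).
  by move=> hy; apply: is_derive_affine_powR_primitive => //; exact: pos.
have lo_in : lo <= lo <= hi by rewrite lexx ltW.
have hi_in : lo <= hi <= hi by rewrite lexx ltW.
apply: continuous_FTC2 => //.
- apply: continuous_in_subspaceT => y; rewrite inE /= in_itv /= => hy.
  exact: is_derive_continuous (is_derive_powR_affine s p y (pos y hy)).
- split.
  + move=> y; rewrite in_itv /= => /andP[h1 h2].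
    by case: (dP y); rewrite ?ltW.
  + by apply: cvg_at_right_filter; exact: is_derive_continuous (dP lo lo_in).
  + by apply: cvg_at_left_filter; exact: is_derive_continuous (dP hi hi_in).
- move=> y; rewrite in_itv /= => /andP[h1 h2].
  by case: (dP y); rewrite ?ltW // => _ <-; rewrite derive1E.
Qed.

Lemma normr_affine_powR_primitive_le s p z : `|s| <= 1 -> -1 < p -> -1 < z < 1 ->
  `|affine_powR_primitive s p z| <= (`|s| * (p + 1))^-1 * 2 `^ (p + 1).
Proof.
move=> hs hp hz; have p1 : 0 < p + 1 by lra.
have /andP[sz0 sz2] := affine_gt0_lt2 _ _ hs hz.
rewrite /affine_powR_primitive normrM normfV normrM (gtr0_norm p1).
rewrite (ger0_norm (powR_ge0 _ _)); apply: ler_wpM2l.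
  by rewrite invr_ge0 mulr_ge0 // ltW.
by apply: ge0_ler_powR; rewrite ?nnegrE; lra.
Qed.

(* The offset n.+2 rather than n.+1 keeps every piece of ]-1, 1[ nondegenerate. *)
Lemma itvoo_bigcup_itvcc (a b : R) :
  `]a, b[%classic = \bigcup_n `[a + n.+2%:R^-1, b - n.+2%:R^-1]%classic.
Proof.
apply/seteqP; split => y /=.
  rewrite in_itv /= => /andP[ay yb].
  have [k] : exists k, 0 + k.+1%:R^-1 < Num.min (y - a) (b - y).
    by apply: ltr_add_invr; rewrite lt_min !subr_gt0 ay yb.
  rewrite add0r lt_min => /andP[ka kb].
  have kk : k.+2%:R^-1 <= k.+1%:R^-1 :> R by rewrite lef_pV2 ?posrE ?ltr0n ?ler_nat.
  exists k => //=; rewrite in_itv /=; move: ka kb kk.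
  set e1 := (k.+1%:R^-1 : R); set e2 := (k.+2%:R^-1 : R); clearbody e1 e2.
  by move=> *; apply/andP; split; lra.
move=> [n _]; rewrite /= !in_itv /=.
have : 0 < n.+2%:R^-1 :> R by rewrite invr_gt0 ltr0n.
set e := (n.+2%:R^-1 : R); clearbody e.
by move=> e0 /andP[h1 h2]; apply/andP; split; lra.
Qed.

Lemma itvcc_shrink_nondecreasing (a b : R) :
  nondecreasing_seq (fun n => `[a + n.+2%:R^-1, b - n.+2%:R^-1]%classic : set R).
Proof.
move=> n m nm; rewrite subsetEset => y /=.
have : m.+2%:R^-1 <= n.+2%:R^-1 :> R by rewrite lef_pV2 ?posrE ?ltr0n ?ler_nat.
set em := (m.+2%:R^-1 : R); set en := (n.+2%:R^-1 : R); clearbody em en.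
by move=> mn; apply: subset_itv; rewrite bnd_simp; lra.
Qed.

Lemma measurable_powR_affine s p (D : set R) :
  measurable_fun D (fun y => (1 + s * y) `^ p).
Proof.
apply: (measurableT_comp (measurable_powR p)).
by apply: measurable_funD; [exact: measurable_cst | exact: mulrl_measurable].
Qed.

Lemma powR_affine_integral_lty s p : s != 0 -> `|s| <= 1 -> -1 < p ->
  (\int[lebesgue_measure]_(y in `](-1)%R : R, 1%R[) ((1 + s * y) `^ p)%:E < +oo)%E.
Proof.
move=> s0 hs hp; have p1 : p + 1 != 0 by apply/eqP => ?; lra.
have mf (D : set R) : measurable_fun D (fun y => ((1 + s * y) `^ p)%:E).
  by apply/measurable_EFinP; exact: measurable_powR_affine.
have := ge0_nondecreasing_set_cvg_integral (mu := lebesgue_measure)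
  (itvcc_shrink_nondecreasing (-1) 1) (fun n => measurable_itv _) (fun n => mf _)
  (fun n y _ => powR_ge0 _ _).
rewrite -itvoo_bigcup_itvcc => cvgF.
set B := (`|s| * (p + 1))^-1 * 2 `^ (p + 1).
rewrite -(cvg_lim _ cvgF) //; apply: (@le_lt_trans _ _ (2 * B)%:E); last exact: ltry.
apply: lime_le; first by apply/cvg_ex; eexists; exact: cvgF.
apply: nearW => n.
have e0 : 0 < n.+2%:R^-1 :> R by rewrite invr_gt0 ltr0n.
have e2 : n.+2%:R^-1 <= 2^-1 :> R by rewrite lef_pV2 ?posrE ?ltr0n ?ler_nat.
move: e0 e2; set e := (n.+2%:R^-1 : R); clearbody e => e0 e2.
have lo_in : -1 < -1 + e < 1 by apply/andP; split; lra.
have hi_in : -1 < 1 - e < 1 by apply/andP; split; lra.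
rewrite integral_powR_affine_gt0_lt2cc //; first last.
- move=> y /andP[y1 y2]; suff /(affine_gt0_lt2 s y hs)/andP[] : -1 < y < 1 by [].
  by apply/andP; split; lra.
- lra.
rewrite -EFinB lee_fin.
have := normr_affine_powR_primitive_le _ _ _ hs hp lo_in.
have := normr_affine_powR_primitive_le _ _ _ hs hp hi_in.
move=> bhi blo; apply: le_trans (ler_norm _) _; apply: le_trans (ler_normB _ _) _.
by apply: le_trans (lerD bhi blo) _; rewrite mulr_natl mulr2n.
Qed.

End affine_powR.

Lemma powR1D_le_expR_norm {R : realType} (q t : R) : 0 <= t <= 1 ->
  (1 + t) `^ q <= expR `|q|.
Proof.
move=> /andP[t0 t1]; rewrite /powR gt_eqF; last lra.
rewrite ler_expR.
have L0 : 0 <= ln (1 + t) by apply: ln_ge0; lra.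
have L1 : ln (1 + t) <= t by apply: le_ln1Dx; lra.
have := ler_norm q; have := ler_norm (- q); rewrite normrN => *; nra.
Qed.

Section jacobi_weight.
Context {R : realType}.
Variables a b : R.

Lemma jacobi_weight_ge0 y : 0 <= jacobi_weight a b y.
Proof. by rewrite /jacobi_weight mulr_ge0 // powR_ge0. Qed.

Lemma measurable_jacobi_weight (D : set R) : measurable_fun D (jacobi_weight a b).
Proof.
apply: measurable_funM.
  apply: (measurableT_comp (measurable_powR a)).
  by apply: measurable_funB; [exact: measurable_cst | exact: measurable_id].
apply: (measurableT_comp (measurable_powR b)).
by apply: measurable_funD; [exact: measurable_cst | exact: measurable_id].
Qed.

Lemma jacobi_weight_le y : -1 < y < 1 ->
  jacobi_weight a b y <= expR `|b| * (1 + (-1) * y) `^ a + expR `|a| * (1 + 1 * y) `^ b.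
Proof.
move=> /andP[y1 y2]; rewrite /jacobi_weight mulN1r mul1r.
have X0 := powR_ge0 (1 - y) a; have Y0 := powR_ge0 (1 + y) b.
have Ea := expR_gt0 `|a|; have Eb := expR_gt0 `|b|.
have [y0|y0] := leP 0 y.
- have : 0 <= y <= 1 by apply/andP; split; lra.
  by move=> /(powR1D_le_expR_norm b) *; nra.
- have : 0 <= - y <= 1 by apply/andP; split; lra.
  by move=> /(powR1D_le_expR_norm a) *; nra.
Qed.

Hypotheses (ha : -1 < a) (hb : -1 < b).

Lemma jacobi_weight_integral_lty :
  (\int[lebesgue_measure]_(y in `](-1)%R : R, 1%R[) (jacobi_weight a b y)%:E < +oo)%E.
Proof.
have mpow s p :
    measurable_fun `](-1)%R : R, 1%R[%classic (fun y : R => ((1 + s * y) `^ p)%:E).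
  by apply/measurable_EFinP; exact: measurable_powR_affine.
have ge0_pow (s p y : R) : (0 <= ((1 + s * y) `^ p)%:E)%E by rewrite lee_fin powR_ge0.
apply: (@le_lt_trans _ _ (\int[lebesgue_measure]_(y in `](-1)%R : R, 1%R[)
    ((expR `|b|)%:E * ((1 + (-1) * y) `^ a)%:E
     + (expR `|a|)%:E * ((1 + 1 * y) `^ b)%:E))%E).
  apply: ge0_le_integral => //.
  - by move=> y _; rewrite lee_fin jacobi_weight_ge0.
  - by apply/measurable_EFinP; exact: measurable_jacobi_weight.
  - by apply: emeasurable_funD; apply: emeasurable_funM => //; exact: mpow.
  - move=> y; rewrite /= in_itv /= => y_in.
    by rewrite -!EFinM -EFinD lee_fin jacobi_weight_le.
rewrite ge0_integralD //; last 4 first.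
- by move=> y _; rewrite mule_ge0 // lee_fin expR_ge0.
- by apply: emeasurable_funM => //; exact: mpow.
- by move=> y _; rewrite mule_ge0 // lee_fin expR_ge0.
- by apply: emeasurable_funM => //; exact: mpow.
rewrite !ge0_integralZl_EFin ?expR_ge0 //; try exact: mpow.
apply: lte_add_pinfty; apply: lte_mul_pinfty; rewrite ?lee_fin ?expR_ge0 //.
all: by apply: powR_affine_integral_lty; rewrite // ?oppr_eq0 ?normrN ?normr1.
Qed.

Lemma jacobi_a0E :
  (\int[lebesgue_measure]_(y in `](-1)%R : R, 1%R[) (jacobi_weight a b y)%:E)%E
  = (jacobi_a0 a b)%:E.
Proof.
rewrite /jacobi_a0 /Rintegral fineK // ge0_fin_numE ?jacobi_weight_integral_lty //.
by apply: integral_ge0 => y _; rewrite lee_fin jacobi_weight_ge0.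
Qed.

End jacobi_weight.

Lemma normr_le_amgm {R : realFieldType} (l p : R) : 0 < l ->
  `|p| <= l / 2 + (2 * l)^-1 * p ^+ 2.
Proof.
move=> l0; rewrite -subr_ge0 -(real_normK (num_real p)).
have -> : l / 2 + (2 * l)^-1 * `|p| ^+ 2 - `|p| = (2 * l)^-1 * (l - `|p|) ^+ 2.
  by field; rewrite gt_eqF.
by rewrite mulr_ge0 ?sqr_ge0 // invr_ge0 mulr_ge0 // ltW.
Qed.

Section weighted_amgm.
Context {d : measure_display} {T : measurableType d} {R : realType}.
Context (mu : {measure set T -> \bar R}) {D : set T} {k f w : T -> R}.
Hypotheses (mD : measurable D) (mk : measurable_fun D k) (mf : measurable_fun D f)
  (mw : measurable_fun D w).
Hypotheses (k_le1 : forall y, D y -> `|k y| <= 1) (w_ge0 : forall y, D y -> 0 <= w y).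

Lemma abse_integral_le_amgm l : 0 < l ->
  (`|\int[mu]_(y in D) (k y * f y * w y)%:E|
   <= (l / 2)%:E * \int[mu]_(y in D) (w y)%:E
      + ((2 * l)^-1)%:E * \int[mu]_(y in D) (f y ^+ 2 * w y)%:E)%E.
Proof.
move=> l0.
have l2_ge0 : 0 <= l / 2 by rewrite divr_ge0 // ltW.
have l2V_ge0 : 0 <= (2 * l)^-1 by rewrite invr_ge0 mulr_ge0 // ltW.
have mwE : measurable_fun D (fun y => (w y)%:E) by exact/measurable_EFinP.
have mf2w : measurable_fun D (fun y => (f y ^+ 2 * w y)%:E).
  by apply/measurable_EFinP; apply: measurable_funM => //; exact: measurable_funX.
have f2w_ge0 y : D y -> (0 <= (f y ^+ 2 * w y)%:E)%E.
  by move=> Dy; rewrite lee_fin mulr_ge0 ?sqr_ge0 ?w_ge0.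
have mkfw : measurable_fun D (fun y => (k y * f y * w y)%:E).
  by apply/measurable_EFinP; apply: measurable_funM => //; exact: measurable_funM.
apply: le_trans (le_abse_integral _ mD mkfw) _.
rewrite -ge0_integralZl_EFin // -[X in (_ + X)%E]ge0_integralZl_EFin //.
rewrite -ge0_integralD //; last 4 first.
- by move=> y Dy; rewrite mule_ge0 // lee_fin w_ge0.
- exact: emeasurable_funM.
- by move=> y Dy; rewrite mule_ge0 // f2w_ge0.
- exact: emeasurable_funM.
apply: ge0_le_integral => //.
- by apply: measurableT_comp => //; exact: abse_measurable.
- by apply: emeasurable_funD; exact: emeasurable_funM.
move=> y Dy; rewrite abse_EFin -!EFinM -EFinD lee_fin mulrA -mulrDl !normrM.
rewrite (ger0_norm (w_ge0 y Dy)) ler_wpM2r ?w_ge0 //.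
apply: le_trans _ (normr_le_amgm l (f y) l0); rewrite -[leRHS]mul1r.
by apply: ler_wpM2r; rewrite ?normr_ge0 ?k_le1.
Qed.

End weighted_amgm.

Lemma le_sqrt_of_forall_amgm {R : rcfType} (A p : R) : 0 <= A ->
  (forall t, 0 < t -> p <= (A / t + t) / 2) -> p <= Num.sqrt A.
Proof.
move=> A0 hp; rewrite leNgt; apply/negP => lt_sp.
have p0 : 0 < p := le_lt_trans (sqrtr_ge0 A) lt_sp.
have : A < p ^+ 2 by rewrite -(sqr_sqrtr A0) ltrXn2r ?sqrtr_ge0.
have := hp p p0; have : A / p * p = A by rewrite mulfVK ?gt_eqF.
by move: (A / p) => q; nra.
Qed.

Theorem proposition1 (R : realType) (a b c : R) (psi : R -> R) (mu : R)
  (ha : -1 < a) (hb : -1 < b) (hc : 0 < c) (hmu : mu != 0)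
  (hpsi_meas : measurable_fun `](-1)%R : R, 1%R[ psi)
  (heig : forall x : R, x \in `](-1)%R : R, 1%R[ ->
     (\int[lebesgue_measure]_(y in `](-1)%R : R, 1%R[)
        (expR (c * (x * y - 1)) * psi y * jacobi_weight a b y)%:E
      = (mu * psi x)%:E)%E)
  (hnorm : (\int[lebesgue_measure]_(y in `](-1)%R : R, 1%R[)
        ((psi y) ^+ 2 * jacobi_weight a b y)%:E = (mu ^+ 2)%:E)%E) :
  forall x : R, x \in `](-1)%R : R, 1%R[ -> `|psi x| <= 1 / jacobiP0 a b x.
Proof.
move=> x xI.
have /andP[x1 x2] : -1 < x < 1 by move: xI; rewrite inE /= in_itv.
have A0 : 0 <= jacobi_a0 a b.
  rewrite -lee_fin -(jacobi_a0E a b ha hb).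
  by apply: integral_ge0 => y _; rewrite lee_fin jacobi_weight_ge0.
rewrite /jacobiP0 div1r invrK; apply: le_sqrt_of_forall_amgm => // t t0.
have kernel_le1 y : `](-1)%R : R, 1%R[ y -> `|expR (c * (x * y - 1))| <= 1.
  rewrite /= in_itv /= => /andP[y1 y2]; rewrite gtr0_norm ?expR_gt0 // expR_le1.
  by rewrite pmulr_rle0 // subr_le0; nra.
have mkernel : measurable_fun `](-1)%R : R, 1%R[ (fun y => expR (c * (x * y - 1))).
  apply: measurableT_comp => //; apply: measurable_funM => //.
  by apply: measurable_funB => //; exact: mulrl_measurable.
have mu0 : 0 < `|mu| by rewrite normr_gt0.
(* With l = |mu|/t the bound becomes |mu psi(x)| <= |mu| (a_0/t + t)/2. *)
have := abse_integral_le_amgm lebesgue_measure (measurable_itv _) mkernel hpsi_meas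
  (measurable_jacobi_weight a b _) kernel_le1 (fun y _ => jacobi_weight_ge0 a b y)
  _ (divr_gt0 mu0 t0).
rewrite heig // jacobi_a0E // hnorm abse_EFin -!EFinM -EFinD lee_fin normrM.
have -> : `|mu| / t / 2 * jacobi_a0 a b + (2 * (`|mu| / t))^-1 * mu ^+ 2
    = `|mu| * ((jacobi_a0 a b / t + t) / 2).
  by rewrite -(real_normK (num_real mu)); field; rewrite !gt_eqF.
by rewrite ler_pM2l.
Qed.
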